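(* Let $F$ be a simple signed graph with at least two edges that has a signed perfect elimination ordering. Then the skeleton (graph of vertices and edges) of the signed graphic zonotope of $F$ has a Hamiltonian cycle.
   Context: A signed graph is a simple graph $F=([n],E)$ together with a partition $E=E^+\cup E^-$ into positive and negative edges. Its signed graphic arrangement $\mathcal{H}(F)$ in $\mathbb{R}^n$ consists of the hyperplanes with normal vectors $e_i-e_j$ for $\{i,j\}\in E^+$ and $e_i+e_j$ for $\{i,j\}\in E^-$ ($e_i$ the standard basis vectors). The signed graphic zonotope of $F$ is the Minkowski sum of the line segments $[-v,v]$ over the normal vectors $v$ of the hyperplanes of $\mathcal{H}(F)$. A vertex $v$ of $F$ is signed simplicial if for any two distinct neighbors $x,y$ of $v$: if $\{v,x\},\{v,y\}$ are both in $E^+$ or both in $E^-$, then $\{x,y\}\in E^+$; and if $\{v,x\}\in E^+$ and $\{v,y\}\in E^-$, then $\{x,y\}\in E^-$. An ordering $v_1,\dots,v_n$ of the vertices is a signed perfect elimination ordering if for each $i$, $v_i$ is signed simplicial in the signed graph obtained from $F$ by deleting $v_1,\dots,v_{i-1}$. *)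

From HB Require Import structures.
From mathcomp Require Import all_boot all_order all_algebra.
From mathcomp Require Import reals.
Set Implicit Arguments. Unset Strict Implicit. Unset Printing Implicit Defensive.
Import Order.TTheory GRing.Theory Num.Theory.
Local Open Scope ring_scope.

(* A signed graph on vertex set 'I_n is given by two relations [pos] and
   [neg] (positive / negative edges), which are symmetric, irreflexive and
   disjoint (E = E^+ \cup E^- is a partition of the edge set of a simple graph). *)
Definition signed_graph (n : nat) (pos neg : rel 'I_n) : Prop :=
  [/\ symmetric pos, symmetric neg,
      (forall i, ~~ pos i i), (forall i, ~~ neg i i)
    & (forall i j, ~~ (pos i j && neg i j))].

Definition sg_edges (n : nat) (pos neg : rel 'I_n) : {set 'I_n * 'I_n} :=
  [set p : 'I_n * 'I_n | (p.1 < p.2)%N && (pos p.1 p.2 || neg p.1 p.2)].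

Definition signed_simplicial (n : nat) (pos neg : rel 'I_n) (S : {set 'I_n})
    (v : 'I_n) : Prop :=
  v \in S /\
  forall x y, x \in S -> y \in S -> x != y -> x != v -> y != v ->
    ((pos v x && pos v y) || (neg v x && neg v y) -> pos x y) /\
    (pos v x && neg v y -> neg x y).

Definition signed_PEO (n : nat) (pos neg : rel 'I_n) (s : seq 'I_n) : Prop :=
  perm_eq s (enum 'I_n) /\
  forall (s1 s2 : seq 'I_n) (v : 'I_n), s = s1 ++ v :: s2 ->
    signed_simplicial pos neg [set x | x \notin s1] v.

Section Zonotope.
Variable R : realType.
Variable n : nat.

Definition dotv (c x : 'rV[R]_n) : R := \sum_(i < n) c 0 i * x 0 i.

Definition unitv (i : 'I_n) : 'rV[R]_n := delta_mx 0 i.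

(* Signed graphic zonotope: Minkowski sum of the segments [-v, v] over the
   normal vectors v = e_i - e_j ({i,j} in E^+) and v = e_i + e_j ({i,j} in E^-),
   each unordered edge counted once (as i < j). *)
Definition signed_zonotope (pos neg : rel 'I_n) (x : 'rV[R]_n) : Prop :=
  exists tp tn : 'I_n -> 'I_n -> R,
    (forall i j, -1 <= tp i j <= 1) /\ (forall i j, -1 <= tn i j <= 1) /\
    x = \sum_(i < n) \sum_(j < n | (i < j)%N && pos i j)
            tp i j *: (unitv i - unitv j)
      + \sum_(i < n) \sum_(j < n | (i < j)%N && neg i j)
            tn i j *: (unitv i + unitv j).

Definition poly_vertex (P : 'rV[R]_n -> Prop) (x : 'rV[R]_n) : Prop :=
  P x /\ exists c, forall y, P y -> y != x -> dotv c y < dotv c x.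

Definition poly_edge (P : 'rV[R]_n -> Prop) (x y : 'rV[R]_n) : Prop :=
  [/\ x != y, poly_vertex P x, poly_vertex P y &
    exists c, [/\ forall z, P z -> dotv c z <= dotv c x,
                  dotv c y = dotv c x &
                  forall z, P z -> dotv c z = dotv c x ->
                    exists l : R, 0 <= l <= 1 /\ z = (1 - l) *: x + l *: y]].

Definition skeleton_hamiltonian (P : 'rV[R]_n -> Prop) : Prop :=
  exists s : seq 'rV[R]_n,
    [/\ uniq s, (3 <= size s)%N,
        (forall x, poly_vertex P x <-> x \in s) &
        forall k, (k < size s)%N ->
          poly_edge P (nth 0 s k) (nth 0 s (k.+1 %% size s))].

End Zonotope.

(* The vertices of the zonotope are the points [zvertex c], one for each region
   of the arrangement, i.e. for each sign vector of a generic functional [c], and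
   two vertices span an edge when their regions are separated by exactly one
   hyperplane.  A Hamiltonian cycle of the skeleton is thus a cyclic listing of the
   regions in which consecutive regions are adjacent.  Such a listing is built by
   adding the vertices of a signed perfect elimination ordering from last to first.
   When a signed simplicial vertex [v] with [k] neighbours is added, every old
   region is cut into [k + 1] slices according to the position of [w v] among the
   thresholds [+-w x] of the neighbours [x]; simpliciality makes the order of these
   thresholds constant on each old region, so the slices of a region form a path.
   Running through these paths alternately upwards and downwards joins the paths of
   consecutive regions, and an even number of old regions closes the cycle. *)

From HB Require Import structures.
From mathcomp Require Import all_boot all_order all_algebra.
From mathcomp Require Import reals.
From mathcomp Require Import zify ring lra.
Set Implicit Arguments. Unset Strict Implicit. Unset Printing Implicit Defensive.
Import Order.TTheory GRing.Theory Num.Theory.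
Local Open Scope ring_scope.

Section RealFacts.
Variable R : realDomainType.

Lemma sgr_bound (a : R) : -1 <= Num.sg a <= 1.
Proof. by case: (sgrP a) => _; lra. Qed.

Lemma mul_le_norm (t a : R) : -1 <= t <= 1 -> t * a <= `|a|.
Proof.
by case/andP=> t1 t2; case: (leP 0 a) => ha; [rewrite ger0_norm | rewrite ltr0_norm]; nra.
Qed.

Lemma mul_eq_norm (t a : R) :
  -1 <= t <= 1 -> a != 0 -> t * a = `|a| -> t = Num.sg a.
Proof.
by case/andP=> t1 t2; case: (sgrP a) => // ha _ e; nra.
Qed.

Lemma sgr_pm1 (a : R) : a != 0 -> Num.sg a = 1 \/ Num.sg a = -1.
Proof. by case: (sgrP a); auto. Qed.

Lemma sgr_neq_opp (a b : R) :
  a != 0 -> b != 0 -> Num.sg a != Num.sg b -> Num.sg b = - Num.sg a.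
Proof.
by move=> /sgr_pm1[]-> /sgr_pm1[]->; rewrite ?eqxx ?opprK //; move=> _; lra.
Qed.

Lemma sgr_eq_gt0 (a b : R) : Num.sg a = Num.sg b -> (0 < a) = (0 < b).
Proof. by move=> e; rewrite -!sgr_cp0 e. Qed.

Lemma gt0_eq_sgr (a b : R) : a != 0 -> b != 0 -> (0 < a) = (0 < b) -> Num.sg a = Num.sg b.
Proof. by case: sgrP => // ha _; case: sgrP. Qed.

Lemma gt0_signM (b : bool) (a : R) : a != 0 -> (0 < (-1) ^+ b * a) = b (+) (0 < a).
Proof.
case: b => a0; rewrite ?mul1r // mulN1r oppr_gt0 ltNge le_eqVlt eq_sym.
by rewrite (negbTE a0).
Qed.

Lemma sgr_conic (p q a b : R) :
  0 < p -> 0 < q -> Num.sg a = Num.sg b -> Num.sg (p * a + q * b) = Num.sg a.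
Proof.
move=> p0 q0 e; case: (sgrP a) e => ha; case: (sgrP b) => hb e; try lra.
- by rewrite ha hb !mulr0 addr0 sgr0.
- by apply: gtr0_sg; nra.
- by apply: ltr0_sg; nra.
Qed.

End RealFacts.

Section DotProduct.
Variables (R : realType) (n : nat).
Implicit Types c x y : 'rV[R]_n.

Lemma dotvDr c x y : dotv c (x + y) = dotv c x + dotv c y.
Proof. by rewrite /dotv -big_split; apply: eq_bigr => k _; rewrite mxE mulrDr. Qed.

Lemma dotv0r c : dotv c 0 = 0.
Proof. by rewrite /dotv big1 // => k _; rewrite mxE mulr0. Qed.

Lemma dotvZr c a x : dotv c (a *: x) = a * dotv c x.
Proof. by rewrite /dotv mulr_sumr; apply: eq_bigr => k _; rewrite mxE mulrCA. Qed.

Lemma dotvNr c x : dotv c (- x) = - dotv c x.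
Proof. by rewrite -scaleN1r dotvZr mulN1r. Qed.

Lemma dotv_sumr c (I : Type) (r : seq I) (P : pred I) (F : I -> 'rV[R]_n) :
  dotv c (\sum_(i <- r | P i) F i) = \sum_(i <- r | P i) dotv c (F i).
Proof. exact: (big_morph _ (dotvDr c) (dotv0r c)). Qed.

Lemma dotv_combl a b c1 c2 x :
  dotv (a *: c1 + b *: c2) x = a * dotv c1 x + b * dotv c2 x.
Proof.
rewrite /dotv !mulr_sumr -big_split; apply: eq_bigr => k _.
by rewrite !mxE mulrDl !mulrA.
Qed.

Lemma dotv_unitv c i : dotv c (unitv R i) = c 0 i.
Proof.
rewrite /dotv (bigD1 i) //= big1 => [|k ki]; first by rewrite !mxE !eqxx mulr1 addr0.
by rewrite !mxE eqxx (negbTE ki) mulr0.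
Qed.

End DotProduct.

Section Polytope.
Variables (R : realType) (n : nat) (P Q : 'rV[R]_n -> Prop).
Hypothesis PQ : forall x, P x <-> Q x.

Lemma poly_vertex_equiv x : poly_vertex P x -> poly_vertex Q x.
Proof. by case=> /PQ Px [c max]; split=> //; exists c => y /PQ; apply: max. Qed.

Lemma poly_edge_equiv x y : poly_edge P x y -> poly_edge Q x y.
Proof.
case=> xy /poly_vertex_equiv vx /poly_vertex_equiv vy [c [max eqc face]].
by split=> //; exists c; split=> // z /PQ; [apply: max | apply: face].
Qed.

End Polytope.

Lemma skeleton_hamiltonian_equiv (R : realType) (n : nat) (P Q : 'rV[R]_n -> Prop) :
  (forall x, P x <-> Q x) -> skeleton_hamiltonian P -> skeleton_hamiltonian Q.
Proof.
move=> PQ [s [us s3 vs es]]; have QP x : Q x <-> P x by split=> /PQ.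
exists s; split=> // [x|k ks]; last exact/(poly_edge_equiv PQ)/es.
by split=> [/(poly_vertex_equiv QP)/(vs x).1 | /(vs x).2/(poly_vertex_equiv PQ)].
Qed.

Section Zonotope.
Variables (R : realType) (n : nat) (E : finType) (A : {set E}) (g : E -> 'rV[R]_n).
Implicit Types (c x : 'rV[R]_n) (t : E -> R).

Definition zsum t : 'rV[R]_n := \sum_(e in A) t e *: g e.

Definition zonotope x : Prop :=
  exists2 t, (forall e, -1 <= t e <= 1) & x = zsum t.

Definition zsupport c : R := \sum_(e in A) `|dotv c (g e)|.

Definition zvertex c : 'rV[R]_n := zsum (fun e => Num.sg (dotv c (g e))).

Definition generic c : Prop := forall e, e \in A -> dotv c (g e) != 0.

Lemma eq_zsum t t' : {in A, t =1 t'} -> zsum t = zsum t'.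
Proof. by move=> tt'; apply: eq_bigr => e /tt' ->. Qed.

Lemma zsum_comb a b t t' :
  a *: zsum t + b *: zsum t' = zsum (fun e => a * t e + b * t' e).
Proof.
rewrite /zsum !scaler_sumr -big_split; apply: eq_bigr => e _.
by rewrite scalerDl !scalerA.
Qed.

Lemma dotv_zsum c t : dotv c (zsum t) = \sum_(e in A) t e * dotv c (g e).
Proof. by rewrite dotv_sumr; apply: eq_bigr => e _; rewrite dotvZr. Qed.

Lemma zvertex_in c : zonotope (zvertex c).
Proof. by exists (fun e => Num.sg (dotv c (g e))) => // e; apply: sgr_bound. Qed.

Lemma dotv_zvertex c : dotv c (zvertex c) = zsupport c.
Proof. by rewrite dotv_zsum; apply: eq_bigr => e _; rewrite -normrEsg. Qed.

Lemma dotv_zsum_le c t : (forall e, -1 <= t e <= 1) -> dotv c (zsum t) <= zsupport c.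
Proof. by move=> tb; rewrite dotv_zsum; apply: ler_sum => e _; apply: mul_le_norm. Qed.

Lemma dotv_zsum_eq c t : (forall e, -1 <= t e <= 1) ->
  dotv c (zsum t) = zsupport c ->
  forall e, e \in A -> dotv c (g e) != 0 -> t e = Num.sg (dotv c (g e)).
Proof.
move=> tb; rewrite dotv_zsum => /eqP; rewrite eq_sym -subr_eq0 -sumrB => /eqP gap0.
move=> e eA ce0; apply: mul_eq_norm => //; apply/eqP; rewrite eq_sym -subr_eq0; apply/eqP.
by apply: (psumr_eq0P _ gap0) => // f _; rewrite subr_ge0 mul_le_norm.
Qed.

Lemma zvertex_vertex c : generic c -> poly_vertex zonotope (zvertex c).
Proof.
move=> gc; split; first exact: zvertex_in.
exists c => y [t tb ->] ne; rewrite lt_neqAle dotv_zvertex dotv_zsum_le // andbT.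
apply: contra ne => /eqP/esym max; apply/eqP/eq_zsum => e eA.
exact: dotv_zsum_eq (gc e eA).
Qed.

Lemma zvertex_inj c1 c2 : generic c1 -> zvertex c1 = zvertex c2 ->
  {in A, forall e, Num.sg (dotv c2 (g e)) = Num.sg (dotv c1 (g e))}.
Proof.
move=> gc1 eq12 e eA.
have := @dotv_zsum_eq c1 (fun f => Num.sg (dotv c2 (g f))) (fun f => sgr_bound _).
by rewrite -/(zvertex c2) -eq12 dotv_zvertex => /(_ erefl e eA (gc1 e eA)).
Qed.

Lemma zsum_add_generator t e0 : e0 \in A ->
  zsum t + g e0 = zsum (fun e => t e + (e == e0)%:R).
Proof.
move=> e0A; rewrite /zsum [in RHS](eq_bigr (fun e => t e *: g e + (e == e0)%:R *: g e)).
  rewrite big_split /=; congr (_ + _).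
  rewrite (bigD1 e0) //= eqxx scale1r big1 ?addr0 // => e /andP[_ /negbTE->].
  by rewrite scale0r.
by move=> e _; rewrite scalerDl.
Qed.

(* If [c] were orthogonal to some generator [g e0], then [zvertex c + g e0] would
   be a second maximizer of [c]. *)
Lemma vertex_zvertex x : (forall e, e \in A -> g e != 0) ->
  poly_vertex zonotope x -> exists2 c, generic c & x = zvertex c.
Proof.
move=> gA [[t tb ->] [c maxc]].
have xE : zsum t = zvertex c.
  apply/eqP; apply: contraT; rewrite eq_sym => /(maxc _ (zvertex_in c)).
  by rewrite dotv_zvertex ltNge dotv_zsum_le.
exists c => // e0 e0A; apply/negP => /eqP ce0.
have ne : zvertex c + g e0 != zsum t by rewrite xE -subr_eq0 addrAC subrr add0r gA.
have : zonotope (zvertex c + g e0).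
  exists (fun e => Num.sg (dotv c (g e)) + (e == e0)%:R); last exact: zsum_add_generator.
  move=> e; case: eqP => [->|_]; last by rewrite addr0 sgr_bound.
  by rewrite ce0 sgr0 add0r /=; lra.
by move/maxc/(_ ne); rewrite dotvDr ce0 addr0 xE ltxx.
Qed.

Section Edge.
Variables (c1 c2 : 'rV[R]_n) (e0 : E).
Hypotheses (gc1 : generic c1) (gc2 : generic c2) (e0A : e0 \in A).
Hypothesis sg_e0 : Num.sg (dotv c1 (g e0)) != Num.sg (dotv c2 (g e0)).
Hypothesis sg_eq :
  {in A, forall e, e != e0 -> Num.sg (dotv c1 (g e)) = Num.sg (dotv c2 (g e))}.

(* This positive combination of [c1] and [c2] is orthogonal to [g e0] and has the
   signs of [c1] and [c2] on all other generators, so its face is the segment. *)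
Definition edge_functional : 'rV[R]_n :=
  `|dotv c2 (g e0)| *: c1 + `|dotv c1 (g e0)| *: c2.

Lemma dotv_edge_functional_e0 : dotv edge_functional (g e0) = 0.
Proof.
move: sg_e0 (gc1 e0A) (gc2 e0A); rewrite dotv_combl.
by case: (sgrP (dotv c1 (g e0))) => // _; case: (sgrP (dotv c2 (g e0))) => // _; lra.
Qed.

Lemma sgr_edge_functional e : e \in A -> e != e0 ->
  Num.sg (dotv edge_functional (g e)) = Num.sg (dotv c1 (g e)).
Proof.
move=> eA ne; rewrite dotv_combl sgr_conic ?normr_gt0 ?gc1 ?gc2 //.
by rewrite sg_eq.
Qed.

Lemma dotv_edge_functional t :
  {in A, forall e, e != e0 -> t e = Num.sg (dotv c1 (g e))} ->
  dotv edge_functional (zsum t) = zsupport edge_functional.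
Proof.
move=> tE; rewrite dotv_zsum; apply: eq_bigr => e eA.
have [->|ne] := eqVneq e e0; first by rewrite dotv_edge_functional_e0 mulr0 normr0.
by rewrite tE // -sgr_edge_functional // -normrEsg.
Qed.

Lemma edge_face z : zonotope z ->
  dotv edge_functional z = zsupport edge_functional ->
  exists l : R, 0 <= l <= 1 /\ z = (1 - l) *: zvertex c1 + l *: zvertex c2.
Proof.
case=> t tb -> max.
have tE e : e \in A -> e != e0 -> t e = Num.sg (dotv c1 (g e)).
  move=> eA ne; rewrite -sgr_edge_functional //.
  by apply: dotv_zsum_eq; rewrite // -sgr_eq0 sgr_edge_functional // sgr_eq0 gc1.
set s := Num.sg (dotv c1 (g e0)).
have s2 : Num.sg (dotv c2 (g e0)) = - s.
  exact: sgr_neq_opp (gc1 e0A) (gc2 e0A) sg_e0.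
have s1 : s = 1 \/ s = -1 by apply: sgr_pm1 (gc1 e0A).
have := tb e0; set u := t e0 => ub.
exists ((1 - s * u) / 2); split; first by case: s1 => ->; lra.
rewrite zsum_comb; apply: eq_zsum => e eA; have [->|ne] := eqVneq e e0.
  by rewrite -/s s2 -/u; case: s1 => ->; field.
by rewrite -sg_eq // tE // -mulrDl addrNK mul1r.
Qed.

Lemma zvertex_edge : poly_edge zonotope (zvertex c1) (zvertex c2).
Proof.
have max c :
    {in A, forall e, e != e0 -> Num.sg (dotv c (g e)) = Num.sg (dotv c1 (g e))} ->
    dotv edge_functional (zvertex c) = zsupport edge_functional.
  by move=> sgc; apply: dotv_edge_functional => e eA ne; rewrite sgc.
split; [|exact: zvertex_vertex|exact: zvertex_vertex|].
  by apply: contra sg_e0 => /eqP/(zvertex_inj gc1)/(_ e0 e0A) ->.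
exists edge_functional; split.
- by move=> z [t tb ->]; rewrite max //; apply: dotv_zsum_le.
- by rewrite !max // => e eA ne; rewrite sg_eq.
- by move=> z zZ; rewrite max //; apply: edge_face.
Qed.

End Edge.
End Zonotope.

Section Cut.
Variable R : realFieldType.
Implicit Types (s : seq R) (j : nat).

(* A point strictly between [s`_j.-1] and [s`_j], with the conventions
   [s`_(-1) = s`_0 - 1] and [s`_(size s) = last s + 1]. *)
Definition cut s j : R :=
  ((if j is j'.+1 then s`_j' else s`_0 - 1) +
   (if (j < size s)%N then s`_j else s`_(size s).-1 + 1)) / 2.

Section Sorted.
Variables (s : seq R) (j : nat).
Hypotheses (s_sorted : sorted <%R s) (j_le : (j <= size s)%N).

Lemma nth_lt_cut i : (i < j)%N -> s`_i < cut s j.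
Proof.
case: j j_le => // j' j's ij'; rewrite /cut.
have sij' : s`_i <= s`_j' by rewrite lt_sorted_leq_nth ?inE // (leq_ltn_trans _ j's).
case: ltnP => [js|_].
  suff : s`_j' < s`_j'.+1 by lra.
  by rewrite lt_sorted_ltn_nth ?inE.
have s0 : (0 < size s)%N by apply: leq_ltn_trans j's.
suff : s`_j' <= s`_(size s).-1 by lra.
by rewrite lt_sorted_leq_nth ?inE ?prednK // -ltnS prednK.
Qed.

Lemma cut_lt_nth i : (j <= i < size s)%N -> cut s j < s`_i.
Proof.
case/andP=> ji iS; rewrite /cut (leq_ltn_trans ji iS).
have sji : s`_j <= s`_i by rewrite lt_sorted_leq_nth ?inE // (leq_ltn_trans ji).
case: j j_le ji sji => [|j'] j's ji sji; first lra.
suff : s`_j' < s`_j'.+1 by lra.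
by rewrite lt_sorted_ltn_nth ?inE // (leq_ltn_trans ji).
Qed.

Lemma cut_notin : cut s j \notin s.
Proof.
apply/(nthP 0) => -[i iS si]; case: (ltnP i j) => ij.
  by have := nth_lt_cut ij; rewrite si ltxx.
by have := @cut_lt_nth i; rewrite ij iS si ltxx => /(_ isT).
Qed.

Lemma count_lt_cut : count (< cut s j) s = j.
Proof.
rewrite -[s in count _ s](mkseq_nth 0) /mkseq count_map.
rewrite -(subnKC j_le) iotaD count_cat add0n.
rewrite (eq_in_count (a2 := predT)) ?count_predT ?size_iota; last first.
  by move=> i; rewrite mem_iota /= => /nth_lt_cut.
rewrite (eq_in_count (a2 := pred0)) ?count_pred0 ?addn0 // => i.
rewrite mem_iota subnKC // => ijs; apply/negbTE; rewrite -leNgt ltW //.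
exact: cut_lt_nth.
Qed.

End Sorted.
End Cut.

Definition opair n (x y : 'I_n) : 'I_n * 'I_n := if (x < y)%N then (x, y) else (y, x).

Lemma opair_inj n (v : 'I_n) : injective (opair v).
Proof.
by move=> x y; rewrite /opair; case: ltnP => vx; case: ltnP => vy [] // -> ->.
Qed.

Lemma divn_modn_eq d p i r : (r < d)%N -> p = (i * d + r)%N -> (p %/ d = i /\ p %% d = r)%N.
Proof.
move=> rd ->; have d0 : (0 < d)%N by apply: leq_ltn_trans rd.
by rewrite divnMDl // divn_small // addn0 modnMDl modn_small.
Qed.

Section SignedGraph.
Variables (R : realFieldType) (n : nat) (pos neg : rel 'I_n).
Hypotheses (pos_sym : symmetric pos) (neg_sym : symmetric neg).
Hypothesis pos_neg_disj : forall i j, ~~ (pos i j && neg i j).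
Implicit Types (S : {set 'I_n}) (w : 'I_n -> R).

Definition edge_form w (e : 'I_n * 'I_n) : R :=
  if pos e.1 e.2 then w e.1 - w e.2 else w e.1 + w e.2.

Definition edges_in S : {set 'I_n * 'I_n} :=
  [set e in sg_edges pos neg | (e.1 \in S) && (e.2 \in S)].

Definition generic_on S w : Prop := forall e, e \in edges_in S -> edge_form w e != 0.

Definition sep S w w' : {set 'I_n * 'I_n} :=
  [set e in edges_in S | (0 < edge_form w e) != (0 < edge_form w' e)].

Lemma sepC S w w' : sep S w w' = sep S w' w.
Proof. by apply/setP => e; rewrite !inE eq_sym. Qed.

Lemma sepxx S w : sep S w w = set0.
Proof. by apply/setP => e; rewrite !inE eqxx andbF. Qed.

Lemma eq_sep S w1 w2 w : w1 =1 w2 -> sep S w1 w = sep S w2 w.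
Proof. by move=> w12; apply/setP => e; rewrite !inE /edge_form !w12. Qed.

Lemma eq_generic_on S w1 w2 : w1 =1 w2 -> generic_on S w1 -> generic_on S w2.
Proof. by move=> w12 gen e eS; rewrite /edge_form -!w12 gen. Qed.

Definition nthw (L : seq ('I_n -> R)) i := nth (fun _ => 0) L i.

(* [L] lists one weight in each region of the arrangement induced on [S], and
   cyclically consecutive regions are separated by a single hyperplane.  The
   parity condition is what lets the cycle be extended by a snake. *)
Record region_cycle S (L : seq ('I_n -> R)) : Prop := RegionCycle {
  rc_generic : forall i, (i < size L)%N -> generic_on S (nthw L i);
  rc_cover : forall w, generic_on S w ->
    exists2 i, (i < size L)%N & sep S w (nthw L i) = set0;
  rc_uniq : forall i j, (i < size L)%N -> (j < size L)%N ->
    sep S (nthw L i) (nthw L j) = set0 -> i = j;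
  rc_adj : forall i, (i.+1 < size L)%N -> #|sep S (nthw L i) (nthw L i.+1)| = 1%N;
  rc_wrap : (1 < size L)%N -> #|sep S (nthw L (size L).-1) (nthw L 0)| = 1%N;
  rc_size : (#|edges_in S| < size L)%N;
  rc_parity : size L = 1%N \/ ~~ odd (size L)
}.

Lemma region_cycle0 S : edges_in S = set0 -> region_cycle S [:: fun _ => 0].
Proof.
move=> S0; split=> //=; last by left.
- by move=> i _ e; rewrite S0 inE.
- by move=> w _; exists 0%N => //; apply/setP => e; rewrite inE S0 inE.
- by case=> [|i] [|j].
- by rewrite S0 cards0.
Qed.

Lemma opair_in_edges S x y : x \in S -> y \in S -> x != y -> pos x y || neg x y ->
  opair x y \in edges_in S.
Proof.
move=> xS yS xy pnxy; rewrite /opair; case: ltngtP => [xy'|yx|/val_inj exy]; rewrite !inE /=.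
- by rewrite xy' pnxy xS yS.
- by rewrite yx pos_sym neg_sym pnxy yS xS.
- by rewrite exy eqxx in xy.
Qed.

Lemma edge_form_pair w x y :
  edge_form w (x, y) = (-1) ^+ ((y < x)%N && pos x y) * edge_form w (opair x y).
Proof.
rewrite /opair /edge_form /=; case: ltngtP => [|_|/val_inj ->]; rewrite ?mul1r //=.
by rewrite pos_sym; case: (pos y x); rewrite ?mulN1r ?mul1r ?opprB // addrC.
Qed.

Section Extension.
Variables (S : {set 'I_n}) (v : 'I_n).
Hypotheses (vNS : v \notin S) (v_simplicial : signed_simplicial pos neg (v |: S) v).

Definition nbrs : {set 'I_n} := [set x in S | pos v x || neg v x].

Definition extend w (t : R) : 'I_n -> R := fun x => if x == v then t else w x.

(* [extend w t] lies on the hyperplane of the edge {v, x} iff [t = threshold w x]. *)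
Definition threshold w x : R := if pos v x then w x else - w x.

Lemma nbrs_neq x : x \in nbrs -> x != v.
Proof. by rewrite inE => /andP[xS _]; apply: contraNneq vNS => <-. Qed.

Lemma edges_in_setU1 : edges_in (v |: S) = edges_in S :|: opair v @: nbrs.
Proof.
apply/setP => -[a b]; rewrite !inE /=; apply/idP/idP.
- case/and3P=> /andP[ab pnab] aS bS.
  have [av|av] := eqVneq a v; last have [bv|bv] := eqVneq b v.
  + have bv : b != v by rewrite -av; apply: contraTneq ab => ->; rewrite ltnn.
    rewrite (negbTE bv) /= in bS; apply/orP; right; apply/imsetP; exists b.
      by rewrite inE bS -av pnab.
    by rewrite /opair -av ab.
  + rewrite bv in ab pnab; rewrite (negbTE av) /= in aS.
    apply/orP; right; apply/imsetP; exists a; first by rewrite inE aS pos_sym neg_sym pnab.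
    by rewrite bv /opair ltnNge ltnW.
  + by rewrite (negbTE av) (negbTE bv) /= in aS bS; rewrite ab pnab aS bS.
- case/orP=> [/and3P[-> aS bS]|/imsetP[x]]; first by rewrite aS bS !orbT.
  rewrite inE /opair => /andP[xS pnx]; case: ltngtP => [vx|xv|/val_inj xv] [-> ->] /=.
  + by rewrite eqxx xS vx pnx orbT.
  + by rewrite eqxx xS xv pos_sym neg_sym pnx orbT.
  + by move: vNS; rewrite xv xS.
Qed.

Lemma disjoint_edges_nbrs : [disjoint edges_in S & opair v @: nbrs].
Proof.
rewrite -setI_eq0; apply/eqP/setP => e; rewrite !inE.
apply/negP => /andP[/andP[_ /andP[e1 e2]] /imsetP[x _ ex]].
by move: e1 e2; rewrite ex /opair; case: ltnP => _ /=; rewrite (negPf vNS).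
Qed.

Lemma card_edges_in_setU1 : #|edges_in (v |: S)| = (#|edges_in S| + #|nbrs|)%N.
Proof.
rewrite edges_in_setU1 cardsU (disjoint_setI0 disjoint_edges_nbrs) cards0 subn0.
by rewrite (card_imset _ (@opair_inj _ v)).
Qed.

Lemma edge_form_extend w t e : e \in edges_in S -> edge_form (extend w t) e = edge_form w e.
Proof.
rewrite !inE => /andP[_ /andP[e1 e2]].
have nv x : x \in S -> (x == v) = false by move=> xS; apply: contraNF vNS => /eqP <-.
by rewrite /edge_form /extend !nv.
Qed.

Lemma edge_form_extend_nbr w t x : x \in nbrs ->
  edge_form (extend w t) (opair v x) = (-1) ^+ (pos v x && (x < v)%N) * (t - threshold w x).
Proof.
move=> xN; have xv := nbrs_neq xN.
rewrite /edge_form /extend /threshold /opair; case: ltngtP => [vx|xv'|/val_inj exv] /=.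
- by rewrite eqxx (negbTE xv) andbF mul1r; case: (pos v x); rewrite ?opprK.
- rewrite eqxx (negbTE xv) andbT pos_sym.
  by case: (pos v x); rewrite ?mulN1r ?mul1r ?opprB // opprK addrC.
- by rewrite exv eqxx in xv.
Qed.

Lemma generic_extend w t : generic_on (v |: S) (extend w t) <->
  generic_on S w /\ {in nbrs, forall x, t != threshold w x}.
Proof.
rewrite /generic_on edges_in_setU1; split.
- move=> gen; split=> [e eS|x xN].
    by rewrite -(edge_form_extend w t eS) gen // inE eS.
  have := gen (opair v x); rewrite edge_form_extend_nbr // mulf_eq0 negb_or subr_eq0.
  by rewrite inE imset_f ?orbT // => /(_ isT)/andP[].
- case=> gen tN e; rewrite inE => /orP[eS|/imsetP[x xN ->]].
    by rewrite edge_form_extend // gen.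
  by rewrite edge_form_extend_nbr // mulf_eq0 negb_or signr_eq0 subr_eq0 tN.
Qed.

Definition crossing w t w' t' : {set 'I_n} :=
  [set x in nbrs | (threshold w x < t) != (threshold w' x < t')].

Lemma mem_crossing w t w' t' x : (x \in crossing w t w' t') =
  (x \in nbrs) && ((threshold w x < t) != (threshold w' x < t')).
Proof. by rewrite in_set. Qed.

Lemma sep_extend w t w' t' :
  {in nbrs, forall x, t != threshold w x} -> {in nbrs, forall x, t' != threshold w' x} ->
  sep (v |: S) (extend w t) (extend w' t') = sep S w w' :|: opair v @: crossing w t w' t'.
Proof.
move=> tN t'N; apply/setP => e.
rewrite {1}/sep in_set edges_in_setU1 !in_setU andb_orl; congr (_ || _).
  by rewrite /sep in_set; case eS: (e \in edges_in S); rewrite //= !edge_form_extend.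
have cross x : x \in nbrs ->
    ((0 < edge_form (extend w t) (opair v x)) != (0 < edge_form (extend w' t') (opair v x)))
    = (x \in crossing w t w' t').
  move=> xN; rewrite !edge_form_extend_nbr // !gt0_signM ?subr_eq0 ?tN ?t'N //.
  by rewrite !subr_gt0 mem_crossing xN; case: (_ && _) (_ < t) (_ < t') => [] [] [].
apply/andP/imsetP => [[/imsetP[x xN ->]]|[x xC ->]].
  by rewrite cross // => xC; exists x.
have xN : x \in nbrs by move: xC; rewrite mem_crossing => /andP[].
by rewrite imset_f // cross.
Qed.

Lemma card_sep_extend w t w' t' :
  {in nbrs, forall x, t != threshold w x} -> {in nbrs, forall x, t' != threshold w' x} ->
  #|sep (v |: S) (extend w t) (extend w' t')| = (#|sep S w w'| + #|crossing w t w' t'|)%N.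
Proof.
move=> tN t'N; rewrite sep_extend // cardsU (card_imset _ (@opair_inj _ v)).
suff /disjoint_setI0-> : [disjoint sep S w w' & opair v @: crossing w t w' t'].
  by rewrite cards0 subn0.
apply: disjointW disjoint_edges_nbrs; first by apply/subsetP => e; rewrite inE => /andP[].
by apply: imsetS; apply/subsetP => x; rewrite inE => /andP[].
Qed.

Lemma nbrs_neg x : x \in nbrs -> neg v x = ~~ pos v x.
Proof.
rewrite inE => /andP[_]; have := pos_neg_disj v x.
by case: (pos v x); case: (neg v x).
Qed.

(* This is where [v] being signed simplicial is used. *)
Lemma nbrs_edge x y : x \in nbrs -> y \in nbrs -> x != y ->
  pos x y = (pos v x == pos v y) /\ neg x y = (pos v x != pos v y).
Proof.
move=> xN yN xy; have [_ simp] := v_simplicial.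
have inS z : z \in nbrs -> z \in v |: S by rewrite !inE => /andP[-> _]; rewrite orbT.
have [pp pn] := simp x y (inS x xN) (inS y yN) xy (nbrs_neq xN) (nbrs_neq yN).
have yx : y != x by rewrite eq_sym.
have [_ np] := simp y x (inS y yN) (inS x xN) yx (nbrs_neq yN) (nbrs_neq xN).
have edge_kind (b : bool) : (b -> pos x y) -> (~~ b -> neg x y) -> pos x y = b /\ neg x y = ~~ b.
  case: b => [/(_ isT) p _ | _ /(_ isT) q]; move: (pos_neg_disj x y);
    by rewrite ?p ?q ?andbT /= => /negbTE ->.
apply: edge_kind; move: pp pn np; rewrite !nbrs_neg // [neg y x]neg_sym;
  by case: (pos v x); case: (pos v y); auto.
Qed.

(* On the neighbours of [v], the order of the thresholds is dictated by the
   hyperplanes of the edges between neighbours. *)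
Lemma threshold_diff x y : x \in nbrs -> y \in nbrs -> x != y ->
  opair x y \in edges_in S /\ exists b : bool,
  forall w, threshold w x - threshold w y = (-1) ^+ b * edge_form w (opair x y).
Proof.
move=> xN yN xy; have [pxy nxy] := nbrs_edge xN yN xy.
have inS z : z \in nbrs -> z \in S by rewrite inE => /andP[].
split.
  by apply: opair_in_edges; rewrite ?inS // pxy nxy; case: (_ == _).
exists (~~ pos v x (+) ((y < x)%N && pos x y)) => w.
rewrite signr_addb -mulrA -(edge_form_pair w x y) /edge_form /threshold /= pxy.
by case: (pos v x); case: (pos v y); rewrite /= ?expr0 ?expr1 ?mul1r ?mulN1r ?opprD ?opprK.
Qed.

Lemma threshold_inj w : generic_on S w -> {in nbrs &, injective (threshold w)}.
Proof.
move=> gen x y xN yN exy; apply/eqP; apply: contraT => xy.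
have [xyS [b thr]] := threshold_diff xN yN xy.
have := thr w; rewrite exy subrr => /esym/eqP; rewrite mulf_eq0 signr_eq0 /=.
by rewrite (negbTE (gen _ xyS)).
Qed.

Lemma threshold_lt_sep0 w w' x y : generic_on S w -> generic_on S w' -> sep S w w' = set0 ->
  x \in nbrs -> y \in nbrs -> (threshold w x < threshold w y) = (threshold w' x < threshold w' y).
Proof.
move=> gen gen' sep0 xN yN; have [->|yx] := eqVneq y x; first by rewrite !ltxx.
have [yxS [b thr]] := threshold_diff yN xN yx.
have same : (0 < edge_form w (opair y x)) = (0 < edge_form w' (opair y x)).
  by move/setP/(_ (opair y x)): sep0; rewrite in_set yxS in_set0 => /negbFE/eqP.
rewrite -[threshold w x < _]subr_gt0 -[threshold w' x < _]subr_gt0 !thr.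
by rewrite !gt0_signM ?gen ?gen' // same.
Qed.

Definition below w t : {set 'I_n} := [set x in nbrs | threshold w x < t].

Lemma mem_below w t x : (x \in below w t) = (x \in nbrs) && (threshold w x < t).
Proof. by rewrite in_set. Qed.

Section SameRegion.
Variables (w w' : 'I_n -> R) (t t' : R).
Hypotheses (gen : generic_on S w) (gen' : generic_on S w') (sep0 : sep S w w' = set0).
Hypothesis t'N : {in nbrs, forall x, t' != threshold w' x}.

(* Both sets are initial segments of the common order of the thresholds. *)
Lemma below_sub : (#|below w t| <= #|below w' t'|)%N -> below w t \subset below w' t'.
Proof.
move=> le; apply/subsetP => x xB; apply: contraT => xNB.
have [xN xt] : x \in nbrs /\ threshold w x < t by move: xB; rewrite inE => /andP[].
have t'x : t' < threshold w' x.
  by move: xNB; rewrite inE xN /= -leNgt le_eqVlt (negbTE (t'N xN)).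
suff : (#|below w' t'| < #|below w t|)%N by rewrite ltnNge le.
apply: (@proper_card _ _ (below w t)); rewrite properE; apply/andP; split.
  apply/subsetP => y yB; have [yN yt'] : y \in nbrs /\ threshold w' y < t'.
    by move: yB; rewrite inE => /andP[].
  rewrite in_set yN (lt_trans _ xt) // (threshold_lt_sep0 gen gen' sep0) //.
  exact: lt_trans yt' t'x.
by apply/subsetPn; exists x.
Qed.

Lemma card_crossing_le : (#|below w t| <= #|below w' t'|)%N ->
  #|crossing w t w' t'| = (#|below w' t'| - #|below w t|)%N.
Proof.
move=> /below_sub sub; rewrite -cardsDS //; apply: eq_card => x.
rewrite in_setD !mem_below mem_crossing; case xN: (x \in nbrs) => //=.
by move: (subsetP sub x); rewrite !mem_below xN /=; case: (_ < t) (_ < t') => [] [] // /(_ isT).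
Qed.
End SameRegion.

Lemma crossingC w t w' t' : crossing w t w' t' = crossing w' t' w t.
Proof. by apply/setP => x; rewrite !inE eq_sym. Qed.

Lemma card_crossing w w' t t' : generic_on S w -> generic_on S w' -> sep S w w' = set0 ->
  {in nbrs, forall x, t != threshold w x} -> {in nbrs, forall x, t' != threshold w' x} ->
  #|crossing w t w' t'| = `|#|below w t| - #|below w' t'| |%N.
Proof.
move=> gen gen' sep0 tN t'N; case: (leqP #|below w t| #|below w' t'|) => le.
  by rewrite distnEr // card_crossing_le.
have le' := ltnW le; rewrite distnEl // crossingC card_crossing_le //.
by rewrite sepC.
Qed.

Lemma crossing_eq0 w t w' t' : below w t = below w' t' -> crossing w t w' t' = set0.
Proof.
move=> eqB; apply/setP => x; rewrite mem_crossing in_set0.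
by move/setP/(_ x): eqB; rewrite !mem_below; case: (x \in nbrs) => //= ->; rewrite eqxx.
Qed.

Definition thresholds w : seq R := sort <=%R [seq threshold w x | x <- enum nbrs].

Definition cut_at w j : R := cut (thresholds w) j.

Lemma size_thresholds w : size (thresholds w) = #|nbrs|.
Proof. by rewrite size_sort size_map cardE. Qed.

Lemma threshold_in w x : x \in nbrs -> threshold w x \in thresholds w.
Proof. by move=> xN; rewrite mem_sort map_f ?mem_enum. Qed.

Lemma sorted_thresholds w : generic_on S w -> sorted <%R (thresholds w).
Proof.
move=> gen; rewrite lt_sorted_uniq_le sort_uniq sort_sorted ?andbT; last exact: le_total.
by rewrite map_inj_in_uniq ?enum_uniq // => x y; rewrite !mem_enum; apply: threshold_inj.
Qed.

Lemma card_below w t : #|below w t| = count (< t) (thresholds w).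
Proof.
rewrite count_sort count_map -size_filter cardE; apply/perm_size/uniq_perm.
- exact: enum_uniq.
- exact/filter_uniq/enum_uniq.
- by move=> x; rewrite mem_enum mem_filter mem_enum mem_below andbC.
Qed.

Section CutAt.
Variables (w : 'I_n -> R) (j : nat).
Hypotheses (gen : generic_on S w) (j_le : (j <= #|nbrs|)%N).

Lemma card_below_cut : #|below w (cut_at w j)| = j.
Proof. by rewrite card_below count_lt_cut ?sorted_thresholds ?size_thresholds. Qed.

Lemma cut_at_neq : {in nbrs, forall x, cut_at w j != threshold w x}.
Proof.
have j_le' : (j <= size (thresholds w))%N by rewrite size_thresholds.
move=> x xN; apply: contraNneq (cut_notin (sorted_thresholds gen) j_le') => eq_cut.
by rewrite -/(cut_at w j) eq_cut threshold_in.
Qed.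

End CutAt.

Lemma below_cut0 w : generic_on S w -> below w (cut_at w 0) = set0.
Proof. by move=> gen; apply: cards0_eq; rewrite card_below_cut. Qed.

Lemma below_cut_nbrs w : generic_on S w -> below w (cut_at w #|nbrs|) = nbrs.
Proof.
move=> gen; apply/eqP; rewrite eqEcard card_below_cut // leqnn andbT.
by apply/subsetP => x; rewrite inE => /andP[].
Qed.

Lemma card_nbrs_le1 : edges_in S = set0 -> (#|nbrs| <= 1)%N.
Proof.
move=> S0; rewrite leqNgt; apply/card_gt1P => -[x [y [xN yN xy]]].
by have [] := threshold_diff xN yN xy; rewrite S0 inE.
Qed.

Lemma extend_id w : extend w (w v) =1 w.
Proof. by move=> x; rewrite /extend; case: eqP => [->|]. Qed.

Section Snake.
Variable L : seq ('I_n -> R).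
Hypothesis rcL : region_cycle S L.
Local Notation m := (size L).
Local Notation k := #|nbrs|.

(* Block [i] of the new cycle refines the region [nthw L i]: [w v] crosses the
   thresholds upwards for even [i] and downwards for odd [i], so consecutive
   blocks meet at the same end. *)
Definition snake i r : nat := if odd i then (k - r)%N else r.

Definition snake_region i r : 'I_n -> R :=
  extend (nthw L i) (cut_at (nthw L i) (snake i r)).

Definition snake_cycle : seq ('I_n -> R) :=
  mkseq (fun p => snake_region (p %/ k.+1) (p %% k.+1)) (m * k.+1).

Lemma snake_le i r : (r <= k)%N -> (snake i r <= k)%N.
Proof. by rewrite /snake; case: odd => // _; apply: leq_subr. Qed.

Lemma snakeK i r : (r <= k)%N -> snake i (snake i r) = r.
Proof. by rewrite /snake; case: odd => //; lia. Qed.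

Lemma snake_inj i r r' : (r <= k)%N -> (r' <= k)%N -> snake i r = snake i r' -> r = r'.
Proof. by rewrite /snake; case: odd => //; lia. Qed.

Lemma snake_region_generic i r : (i < m)%N -> (r <= k)%N ->
  generic_on (v |: S) (snake_region i r).
Proof.
move=> im rk; apply/generic_extend; split; first exact: rc_generic.
by apply: cut_at_neq; rewrite ?snake_le //; apply: rc_generic.
Qed.

Lemma card_sep_snake i i' r r' : (i < m)%N -> (i' < m)%N -> (r <= k)%N -> (r' <= k)%N ->
  #|sep (v |: S) (snake_region i r) (snake_region i' r')| =
  (#|sep S (nthw L i) (nthw L i')| +
   #|crossing (nthw L i) (cut_at (nthw L i) (snake i r))
              (nthw L i') (cut_at (nthw L i') (snake i' r'))|)%N.
Proof.
by move=> im i'm rk r'k; rewrite card_sep_extend //; apply: cut_at_neq;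
  rewrite ?snake_le //; apply: rc_generic.
Qed.

Lemma card_sep_snake_block i r r' : (i < m)%N -> (r <= k)%N -> (r' <= k)%N ->
  #|sep (v |: S) (snake_region i r) (snake_region i r')| = `|snake i r - snake i r'|%N.
Proof.
move=> im rk r'k; have gen := rc_generic rcL im.
rewrite card_sep_snake // sepxx cards0 add0n card_crossing ?sepxx //.
  by rewrite !card_below_cut ?snake_le.
all: by apply: cut_at_neq; rewrite ?snake_le.
Qed.

Lemma card_sep_snake_end i i' r r' : (i < m)%N -> (i' < m)%N -> (r <= k)%N -> (r' <= k)%N ->
  snake i r = snake i' r' -> snake i r \in [:: 0%N; k] ->
  #|sep (v |: S) (snake_region i r) (snake_region i' r')| = #|sep S (nthw L i) (nthw L i')|.
Proof.
move=> im i'm rk r'k eqj j0k; rewrite card_sep_snake // crossing_eq0 ?cards0 ?addn0 //.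
have [gen gen'] := (rc_generic rcL im, rc_generic rcL i'm).
by rewrite -eqj; move: j0k; rewrite !inE => /orP[] /eqP->; rewrite ?below_cut0 ?below_cut_nbrs.
Qed.

Lemma snake_cycle_index p : (p < m * k.+1)%N ->
  [/\ (p %/ k.+1 < m)%N, (p %% k.+1 <= k)%N &
      nthw snake_cycle p = snake_region (p %/ k.+1) (p %% k.+1)].
Proof.
move=> pm; split.
- by rewrite ltn_divLR.
- by rewrite -ltnS ltn_pmod.
- by rewrite /nthw nth_mkseq.
Qed.

Lemma snake_cycle_cover w : generic_on (v |: S) w ->
  exists2 p, (p < m * k.+1)%N & sep (v |: S) w (nthw snake_cycle p) = set0.
Proof.
move=> /(eq_generic_on (fun x => esym (extend_id w x)))/generic_extend[gen wvN].
have [i im sep0] := rc_cover rcL gen.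
set j := #|below w (w v)|.
have jk : (j <= k)%N by apply/subset_leq_card/subsetP => x; rewrite mem_below => /andP[].
have rK : (snake i j < k.+1)%N by rewrite ltnS snake_le.
have [pi pr] := divn_modn_eq rK (erefl (i * k.+1 + snake i j)%N).
have pm : (i * k.+1 + snake i j < m * k.+1)%N by rewrite -ltn_divLR // pi.
exists (i * k.+1 + snake i j)%N => //; have [_ _ ->] := snake_cycle_index pm.
rewrite pi pr -(eq_sep _ _ (extend_id w)); apply: cards0_eq.
have gi := rc_generic rcL im; have cut_neq := cut_at_neq gi jk.
rewrite /snake_region snakeK // card_sep_extend // sep0 cards0 add0n.
by rewrite card_crossing // card_below_cut // distnn.
Qed.

Lemma snake_cycle_uniq p q : (p < m * k.+1)%N -> (q < m * k.+1)%N ->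
  sep (v |: S) (nthw snake_cycle p) (nthw snake_cycle q) = set0 -> p = q.
Proof.
move=> pm qm; have [pi pr ->] := snake_cycle_index pm; have [qi qr ->] := snake_cycle_index qm.
move=> sep0; have eqi : (p %/ k.+1 = q %/ k.+1)%N.
  apply: (rc_uniq rcL pi qi); apply/cards0_eq; move: (card_sep_snake pi qi pr qr).
  by rewrite sep0 cards0 => /esym/eqP; rewrite addn_eq0 => /andP[/eqP].
have eqr : (p %% k.+1 = q %% k.+1)%N.
  move: (card_sep_snake_block pi pr qr); rewrite {2}eqi sep0 cards0 => /esym/eqP.
  by rewrite distn_eq0 => /eqP; apply: snake_inj.
by rewrite (divn_eq p k.+1) (divn_eq q k.+1) eqi eqr.
Qed.

Lemma snake_cycle_adj p : (p.+1 < m * k.+1)%N ->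
  #|sep (v |: S) (nthw snake_cycle p) (nthw snake_cycle p.+1)| = 1%N.
Proof.
move=> pm; have [pi pr ->] := snake_cycle_index (ltnW pm).
have [p'i p'r ->] := snake_cycle_index pm.
have [rk|rk] := ltnP (p %% k.+1) k.
  have [-> ->] : (p.+1 %/ k.+1 = p %/ k.+1 /\ p.+1 %% k.+1 = (p %% k.+1).+1)%N.
    by apply: divn_modn_eq; rewrite ?ltnS // {1}(divn_eq p k.+1) addnS.
  rewrite card_sep_snake_block // /snake; case: odd; last exact: distnS.
  by rewrite subnS -(prednK (_ : 0 < k - p %% k.+1)%N) ?subn_gt0 // distnC distnS.
have pk : (p %% k.+1)%N = k by apply/eqP; rewrite eqn_leq pr.
have [ei er] : (p.+1 %/ k.+1 = (p %/ k.+1).+1 /\ p.+1 %% k.+1 = 0)%N.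
  by apply: divn_modn_eq; rewrite // {1}(divn_eq p k.+1) pk -addnS addn0 mulSn addnC.
rewrite ei er in p'i p'r *; rewrite card_sep_snake_end //; first exact: rc_adj.
  by rewrite /snake pk /=; case: odd; rewrite /= ?subnn ?subn0.
by rewrite /snake pk; case: odd; rewrite ?subnn !inE eqxx ?orbT.
Qed.

Lemma snake_cycle_wrap : (1 < m * k.+1)%N ->
  #|sep (v |: S) (nthw snake_cycle (m * k.+1).-1) (nthw snake_cycle 0)| = 1%N.
Proof.
move=> mk1; have m0 : (0 < m)%N by apply: leq_ltn_trans (rc_size rcL).
have mk0 : (0 < m * k.+1)%N by rewrite muln_gt0 m0.
have lm : ((m * k.+1).-1 < m * k.+1)%N by rewrite ltn_predL.
have [li lr ->] := snake_cycle_index lm.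
have [fi fr ->] := snake_cycle_index mk0.
have [ei er] : ((m * k.+1).-1 %/ k.+1 = m.-1 /\ (m * k.+1).-1 %% k.+1 = k)%N.
  by apply: divn_modn_eq => //; rewrite -{1}(prednK m0) mulSn; lia.
rewrite ei er in li lr *; rewrite div0n mod0n in fi fr *.
case: (rc_parity rcL) => [m1|even_m].
  have S0 : edges_in S = set0 by apply: cards0_eq; move: (rc_size rcL); rewrite m1; lia.
  have k1 : k = 1%N by move: (card_nbrs_le1 S0) mk1; rewrite m1 mul1n; lia.
  by rewrite m1 /= card_sep_snake_block // /snake /= k1.
have m1 : (1 < m)%N by move: even_m m0; case: (m) => [|[]].
rewrite card_sep_snake_end //; first exact: rc_wrap.
  by rewrite /snake -subn1 oddB // (negbTE even_m) /= subnn.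
by rewrite /snake -subn1 oddB // (negbTE even_m) /= subnn inE eqxx.
Qed.

Lemma snake_cycle_size : (#|edges_in (v |: S)| < m * k.+1)%N.
Proof. by rewrite card_edges_in_setU1 mulnS; move: (rc_size rcL); nia. Qed.

Lemma snake_cycle_parity : (m * k.+1 = 1)%N \/ ~~ odd (m * k.+1).
Proof.
case: (rc_parity rcL) => [m1|even_m]; last by right; rewrite oddM negb_and even_m.
have k1 : (k <= 1)%N by apply/card_nbrs_le1/cards0_eq; move: (rc_size rcL); rewrite m1; lia.
by rewrite m1 mul1n; move: k1; case: (k) => [|[]]; [left | right |].
Qed.

Lemma region_cycle_snake : region_cycle (v |: S) snake_cycle.
Proof.
split; rewrite size_mkseq.
- by move=> p pm; have [pi pr ->] := snake_cycle_index pm; apply: snake_region_generic.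
- exact: snake_cycle_cover.
- exact: snake_cycle_uniq.
- exact: snake_cycle_adj.
- exact: snake_cycle_wrap.
- exact: snake_cycle_size.
- exact: snake_cycle_parity.
Qed.

End Snake.

End Extension.

Lemma region_cycle_of_PEO s : signed_PEO pos neg s -> exists L, region_cycle [set: 'I_n] L.
Proof.
case=> perm_s peo; have uniq_s : uniq s by rewrite (perm_uniq perm_s) enum_uniq.
have mem_s x : x \in s by rewrite (perm_mem perm_s) mem_enum.
suff suffix s2 s1 : s = s1 ++ s2 -> exists L, region_cycle [set x in s2] L.
  have [L rcL] := suffix s [::] erefl; exists L.
  by rewrite (_ : [set: 'I_n] = [set x in s]) //; apply/setP => x; rewrite !inE mem_s.
elim: s2 s1 => [|v s2 IH] s1 s12.
  by exists [:: fun _ => 0]; apply: region_cycle0; apply/setP => e; rewrite !inE andbF.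
have [L rcL] : exists L, region_cycle [set x in s2] L.
  by apply: (IH (rcons s1 v)); rewrite cat_rcons.
have vNs2 : v \notin [set x in s2].
  by move: uniq_s; rewrite s12 cat_uniq inE /= => /and4P[].
have Sv : [set x in v :: s2] = v |: [set x in s2] by apply/setP => x; rewrite !inE.
have simp : signed_simplicial pos neg (v |: [set x in s2]) v.
  rewrite -Sv (_ : [set x in v :: s2] = [set x | x \notin s1]); first exact: peo s12.
  apply/setP => x; rewrite !in_set; move: uniq_s (mem_s x); rewrite s12 cat_uniq mem_cat.
  case/and3P=> _ /hasPn/(_ x) disj _; case: (x \in s1) disj => //= disj _.
  by apply/negbTE/negP => /disj.
exists (snake_cycle [set x in s2] v L); rewrite Sv.
exact (region_cycle_snake vNs2 simp rcL).
Qed.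

End SignedGraph.

Section SignedZonotope.
Variables (R : realType) (n : nat) (pos neg : rel 'I_n).
Hypothesis pos_neg_disj : forall i j, ~~ (pos i j && neg i j).

Definition normal (e : 'I_n * 'I_n) : 'rV[R]_n :=
  if pos e.1 e.2 then unitv R e.1 - unitv R e.2 else unitv R e.1 + unitv R e.2.

Local Notation edges := (sg_edges pos neg).
Local Notation Z := (zonotope edges normal).
Local Notation rv w := (\row_k w k : 'rV[R]_n).
Local Notation T := [set: 'I_n].

Lemma zsum_sg_edges t : zsum edges normal t =
  \sum_(i < n) \sum_(j < n | (i < j)%N && pos i j) t (i, j) *: (unitv R i - unitv R j) +
  \sum_(i < n) \sum_(j < n | (i < j)%N && neg i j) t (i, j) *: (unitv R i + unitv R j).
Proof.
rewrite /zsum (bigID (fun e => pos e.1 e.2)) /= !pair_big_dep /=.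
apply: (f_equal2 +%R); apply: eq_big => -[i j]; rewrite ?inE /=.
- by case: (pos i j); rewrite ?andbT ?andbF.
- by move=> /andP[_ pij]; rewrite /normal /= pij.
- by move: (pos_neg_disj i j); case: (pos i j); case: (neg i j); rewrite ?andbT ?andbF.
- by move=> /andP[_ /negbTE pij]; rewrite /normal /= pij.
Qed.

Lemma signed_zonotopeE x : signed_zonotope pos neg x <-> Z x.
Proof.
split=> [[tp [tn [tpb [tnb ->]]]]|[t tb ->]].
  exists (fun e => if pos e.1 e.2 then tp e.1 e.2 else tn e.1 e.2) => [e|].
    by case: ifP.
  rewrite zsum_sg_edges; congr (_ + _);
    apply: eq_bigr => i _; apply: eq_bigr => j /andP[_ pnij] /=.
  - by rewrite pnij.
  - by move: (pos_neg_disj i j); rewrite pnij andbT => /negbTE->.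
exists (fun i j => t (i, j)), (fun i j => t (i, j)); do 2 split => //.
exact: zsum_sg_edges.
Qed.

Lemma dotv_normal w e : dotv (rv w) (normal e) = edge_form pos w e.
Proof.
by rewrite /normal /edge_form; case: ifP; rewrite ?dotvDr ?dotvNr !dotv_unitv !mxE.
Qed.

Lemma normal_neq0 e : e \in edges -> normal e != 0.
Proof.
rewrite inE => /andP[e12 _]; have ne : (e.1 == e.2) = false.
  by apply: contraTF e12 => /eqP->; rewrite ltnn.
apply/negP => /eqP/rowP/(_ e.1); rewrite /normal; case: pos;
  by rewrite !mxE !eqxx ne /= ?subr0 ?addr0 => /eqP; rewrite pnatr_eq0.
Qed.

Lemma edges_in_setT : edges_in pos neg T = edges.
Proof. by apply/setP => e; rewrite !inE /= andbT. Qed.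

Lemma generic_rv w : generic edges normal (rv w) <-> generic_on pos neg T w.
Proof.
by rewrite /generic /generic_on edges_in_setT; split=> gen e /gen; rewrite dotv_normal.
Qed.

Lemma mem_sepT w w' e : (e \in sep pos neg T w w') =
  (e \in edges) && ((0 < dotv (rv w) (normal e)) != (0 < dotv (rv w') (normal e))).
Proof. by rewrite in_set edges_in_setT !dotv_normal. Qed.

Lemma zvertex_rv_eq w w' : generic_on pos neg T w -> generic_on pos neg T w' ->
  zvertex edges normal (rv w) = zvertex edges normal (rv w') <-> sep pos neg T w w' = set0.
Proof.
move=> /generic_rv gen /generic_rv gen'; split=> [/(zvertex_inj gen) eqsg|sep0].
  apply/setP => e; rewrite mem_sepT in_set0; case eE: (e \in edges) => //=.
  by rewrite (sgr_eq_gt0 (eqsg e eE)) eqxx.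
apply: eq_zsum => e eE; apply: gt0_eq_sgr; rewrite ?gen ?gen' //.
by apply/eqP/negPn/negP => d; move: (in_set0 e); rewrite -sep0 mem_sepT eE d.
Qed.

Lemma vertex_rv x : poly_vertex Z x ->
  exists2 w, generic_on pos neg T w & x = zvertex edges normal (rv w).
Proof.
case/(vertex_zvertex normal_neq0) => c gen ->.
have cE : rv (c 0) = c by apply/rowP => k; rewrite mxE.
by exists (c 0); rewrite ?cE // -generic_rv cE.
Qed.

Lemma edge_rv w w' : generic_on pos neg T w -> generic_on pos neg T w' ->
  #|sep pos neg T w w'| = 1%N ->
  poly_edge Z (zvertex edges normal (rv w)) (zvertex edges normal (rv w')).
Proof.
move=> /generic_rv gen /generic_rv gen' /eqP/cards1P[e0 sepE].
have := set11 e0; rewrite -sepE mem_sepT => /andP[e0E d0].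
apply: (zvertex_edge gen gen' e0E); first by apply: (contraNneq _ d0) => /sgr_eq_gt0 ->.
move=> e eE ne; apply: gt0_eq_sgr; rewrite ?gen ?gen' //.
by apply/eqP/negPn/negP => d; move: ne; rewrite -in_set1 -sepE mem_sepT eE d.
Qed.

Lemma region_cycle_hamiltonian (L : seq ('I_n -> R)) :
  region_cycle pos neg T L -> (2 <= #|edges|)%N -> skeleton_hamiltonian Z.
Proof.
move=> rcL edges2.
have L3 : (2 < size L)%N by move: (rc_size rcL); rewrite edges_in_setT; apply: leq_ltn_trans.
have nthE i : (i < size L)%N ->
    nth 0 [seq zvertex edges normal (rv w) | w <- L] i = zvertex edges normal (rv (nthw L i)).
  by move=> iL; rewrite (nth_map (fun _ => 0)).
exists [seq zvertex edges normal (rv w) | w <- L]; split; rewrite ?size_map.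
- apply/(uniqP 0) => i j; rewrite !inE size_map => iL jL; rewrite !nthE // => eqz.
  by apply: (rc_uniq rcL) => //; apply/(zvertex_rv_eq (rc_generic rcL iL) (rc_generic rcL jL)).
- exact: L3.
- move=> x; split.
    case/vertex_rv => w gen ->.
    have [i iL /(zvertex_rv_eq gen (rc_generic rcL iL)) ->] := rc_cover rcL gen.
    by apply/(nthP 0); exists i; rewrite ?size_map ?nthE.
  case/(nthP 0) => i; rewrite size_map => iL <-; rewrite nthE //.
  exact/zvertex_vertex/generic_rv/(rc_generic rcL).
- move=> k kL; have L0 : (0 < size L)%N by apply: leq_ltn_trans kL.
  have k1L : (k.+1 %% size L < size L)%N by rewrite ltn_pmod.
  rewrite !nthE //; apply: edge_rv; [exact: (rc_generic rcL) | exact: (rc_generic rcL) |].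
  have [kL'|] := ltnP k.+1 (size L); first by rewrite modn_small // (rc_adj rcL).
  move=> Lk; have -> : k = (size L).-1 by apply/eqP; rewrite -eqSS prednK // eqn_leq Lk kL.
  by rewrite prednK // modnn (rc_wrap rcL) // (ltn_trans _ L3).
Qed.

End SignedZonotope.

Theorem corollary1p3 (R : realType) (n : nat) (pos neg : rel 'I_n) :
  signed_graph pos neg ->
  (2 <= #|sg_edges pos neg|)%N ->
  (exists s : seq 'I_n, signed_PEO pos neg s) ->
  skeleton_hamiltonian (signed_zonotope (R := R) pos neg).
Proof.
case=> pos_sym neg_sym _ _ pos_neg_disj edges2 [s peo].
have [L rcL] := region_cycle_of_PEO R pos_sym neg_sym pos_neg_disj peo.
apply: skeleton_hamiltonian_equiv (region_cycle_hamiltonian rcL edges2) => x.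
by split=> /(signed_zonotopeE pos_neg_disj).
Qed.
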